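(* Let $T$ be a tree with $ex(T)\ge1$ satisfying $\dim_{1,f}(T)=\dim_f(T)$. Then: (a) if $v\in M_2(T)$, then every terminal vertex of $v$ is adjacent to $v$ in $T$; (b) $T$ contains no major vertex of terminal degree one; (c) $T$ contains neither a major vertex of terminal degree zero nor an interior degree-two vertex.
   Context: $d(x,y)$ is the distance in the tree. For a function $g$ on $V(T)$ and $U\subseteq V(T)$, $g(U)=\sum_{s\in U}g(s)$. $R\{x,y\}=\{z: d(x,z)\ne d(y,z)\}$; $g:V(T)\to[0,1]$ is a resolving function if $g(R\{x,y\})\ge1$ for all distinct $x,y$; $\dim_f(T)$ is the minimum of $g(V(T))$ over resolving functions. $d_1(x,y)=\min\{d(x,y),2\}$, $R_1\{x,y\}=\{z: d_1(x,z)\neq d_1(y,z)\}$; $h:V(T)\to[0,1]$ is a $1$-truncated resolving function if $h(R_1\{x,y\})\ge 1$ for all distinct $x,y$, and $\dim_{1,f}(T)$ is the minimum of $h(V(T))$ over such $h$. A leaf has degree one; a major vertex has degree at least three. A leaf $\ell$ is a terminal vertex of a major vertex $v$ if $d(\ell,v)<d(\ell,w)$ for every other major vertex $w$; the terminal degree $ter(v)$ is the number of terminal vertices of $v$; an exterior major vertex is a major vertex with $ter(v)>0$. $M(T)$ is the set of exterior major vertices, $ex(T)=|M(T)|$, $M_2(T)=\{w\in M(T): ter(w)\ge2\}$. An interior degree-two vertex is a vertex of degree $2$ such that the shortest path from it to any terminal vertex includes a major vertex. *)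

From mathcomp Require Import all_boot all_order all_algebra.
From mathcomp Require Import reals.
Set Implicit Arguments. Unset Strict Implicit. Unset Printing Implicit Defensive.
Import Order.TTheory GRing.Theory Num.Theory.

Section TreeDefs.
Variables (T : finType) (e : rel T).

Definition simple_graph : Prop := symmetric e /\ irreflexive e.

Definition is_cycle (c : seq T) : bool := [&& 2 < size c, uniq c & cycle e c].

Definition is_tree : Prop :=
  [/\ simple_graph, 0 < #|T|, (forall x y, connect e x y)
    & (forall c, ~~ is_cycle c)].

Definition ball (n : nat) (x : T) : {set T} :=
  iter n (fun A => A :|: [set y | [exists z in A, e z y]]) [set x].

(* Graph distance (for a connected graph on #|T| vertices). *)
Definition dist (x y : T) : nat :=
  find (fun n => y \in ball n x) (iota 0 #|T|).

Definition dist1 (x y : T) : nat := minn (dist x y) 2.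

Definition deg (v : T) : nat := #|[set w | e v w]|.
Definition leaf (v : T) : bool := deg v == 1.
Definition major (v : T) : bool := 2 < deg v.

Definition terminal_of (l v : T) : bool :=
  [&& leaf l, major v & [forall w, (major w && (w != v)) ==> (dist l v < dist l w)]].

Definition ter (v : T) : nat := #|[set l | terminal_of l v]|.
Definition terminal (l : T) : bool := [exists v, terminal_of l v].

Definition exterior_major (v : T) : bool := major v && (0 < ter v).
Definition MT : {set T} := [set v | exterior_major v].
Definition ex_T : nat := #|MT|.
Definition M2 : {set T} := [set w in MT | 1 < ter w].

(* An interior degree-two vertex: degree 2 and the (unique) shortest path from u
   to any terminal vertex l contains a major vertex z, i.e. a major z with
   d(u,z) + d(z,l) = d(u,l). *)
Definition interior_deg2 (u : T) : bool :=
  (deg u == 2) &&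
  [forall l, terminal l ==>
     [exists z, major z && (dist u z + dist z l == dist u l)]].

Variable R : realType.

Definition Rset (x y : T) : {set T} := [set z | dist x z != dist y z].
Definition R1set (x y : T) : {set T} := [set z | dist1 x z != dist1 y z].

Local Open Scope ring_scope.

Definition gsum (g : T -> R) (U : {set T}) : R := \sum_(s in U) g s.

Definition unit_valued (g : T -> R) : Prop := forall s, 0 <= g s <= 1.

Definition resolving_fun (g : T -> R) : Prop :=
  unit_valued g /\ forall x y, x != y -> 1 <= gsum g (Rset x y).

Definition trunc1_resolving_fun (h : T -> R) : Prop :=
  unit_valued h /\ forall x y, x != y -> 1 <= gsum h (R1set x y).

Definition is_min_total (P : (T -> R) -> Prop) (v : R) : Prop :=
  (exists g, P g /\ gsum g setT = v) /\ (forall g, P g -> v <= gsum g setT).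

Definition is_fdim (v : R) : Prop := is_min_total resolving_fun v.
Definition is_1fdim (v : R) : Prop := is_min_total trunc1_resolving_fun v.

End TreeDefs.

From mathcomp Require Import all_boot all_order all_algebra.
From mathcomp Require Import reals.
From mathcomp Require Import lra.
Set Implicit Arguments. Unset Strict Implicit. Unset Printing Implicit Defensive.
Import Order.TTheory GRing.Theory Num.Theory.

(* Putting weight 1/2 on every leaf gives a resolving function: for x != y,
   the vertex farthest from y among those closer to x than to y is a leaf,
   and symmetrically, so two distinct leaves resolve x and y.  Hence an optimal 1-truncated resolving function h has total
   weight at most |L|/2.  Charge to every non-leaf s its excess
   h(s) + sum_(leaves l ~ s) (h(l) - 1/2); the excesses add up to
   h(V) - |L|/2 <= 0.  The constraints h(R_1{x,y}) >= 1 for pairs of leaves,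
   of a leaf and its support, or of two leaves of neighbouring supports make
   this total strictly positive as soon as some non-leaf has at most one leaf
   neighbour.  So every non-leaf is adjacent to at least two leaves, which
   makes it major, attaches every leaf to its terminal major vertex and gives
   every major vertex terminal degree at least 2. *)

Section PairwiseSum.
Variables (R : realFieldType) (I : finType).
Local Open Scope ring_scope.

Lemma sumr_ge0_pairwise (A : {set I}) (b : I -> R) :
  #|A| != 1%N -> {in A &, forall x y, x != y -> 0 <= b x + b y} ->
  0 <= \sum_(x in A) b x.
Proof.
move=> A_ne1 b_pair.
have [/existsP [x /andP [xA bx_lt0]]|/existsPn b_ge0] := boolP [exists x in A, b x < 0];
  last by apply: sumr_ge0 => x xA; move: (b_ge0 x); rewrite xA /= -leNgt.
rewrite (big_setD1 _ xA) /=.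
have : \sum_(y in A :\ x) - b x <= \sum_(y in A :\ x) b y.
  apply: ler_sum => y; rewrite !inE => /andP [yx yA].
  by rewrite -subr_ge0 opprK addrC b_pair // eq_sym.
rewrite sumr_const; have := A_ne1; rewrite (cardsD1 x) xA.
case: #|A :\ x| => // k _; rewrite mulrS.
have : 0 <= - b x *+ k by rewrite mulrn_wge0 // oppr_ge0 ltW.
lra.
Qed.

End PairwiseSum.

Section Weights.
Variables (R : realType) (T : finType) (g : T -> R).
Local Open Scope ring_scope.
Hypothesis g_ge0 : forall s, 0 <= g s.

Lemma gsum_ge0 (A : {set T}) : 0 <= gsum g A.
Proof. exact: sumr_ge0. Qed.

Lemma gsum_subset (A B : {set T}) : A \subset B -> gsum g A <= gsum g B.
Proof.
move=> AB; rewrite /gsum [X in _ <= X](big_setID A) (setIidPr AB) lerDl.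
exact: gsum_ge0.
Qed.

Lemma gsum_cover (A Y : {set T}) (xs : seq T) :
  (forall z, z \in A -> (z \in xs) || (z \in Y)) ->
  gsum g A <= \sum_(x <- xs) g x + gsum g Y.
Proof.
elim: xs A => [|x xs IHxs] A A_cover.
  by rewrite big_nil add0r gsum_subset //; apply/subsetP => z /A_cover.
rewrite big_cons -addrA; apply: le_trans (_ : g x + gsum g (A :\ x) <= _).
  have [xA|xA] := boolP (x \in A); first by rewrite /gsum (big_setD1 _ xA).
  by rewrite (setDidPl _) ?lerDr // disjoint_sym disjoints1.
rewrite lerD2l IHxs // => z; rewrite !inE => /andP [zx /A_cover].
by rewrite inE (negbTE zx).
Qed.

End Weights.

(** * Distances in a connected graph *)

Section Tree.
Variables (T : finType) (e : rel T).
Hypothesis e_conn : forall x y, connect e x y.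

Lemma ballS n x :
  ball e n.+1 x = ball e n x :|: [set y | [exists z in ball e n x, e z y]].
Proof. by rewrite /ball iterS. Qed.

Lemma ball_step n x w z : w \in ball e n x -> e w z -> z \in ball e n.+1 x.
Proof.
by move=> w_in wz; rewrite ballS !inE; apply/orP; right; apply/existsP; exists w; rewrite w_in.
Qed.

Lemma path_ball x p : path e x p -> last x p \in ball e (size p) x.
Proof.
elim/last_ind: p => [|p y IHp]; first by rewrite /= /ball /= inE.
rewrite rcons_path last_rcons size_rcons => /andP [/IHp p_in p_y].
exact: ball_step p_in p_y.
Qed.

Lemma ball_dist_le x z n : z \in ball e n x -> dist e x z <= n.
Proof.
move=> z_in; rewrite /dist; case: (leqP #|T| n) => [Tn|nT].
  by apply: leq_trans (find_size _ _) _; rewrite size_iota.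
rewrite leqNgt; apply/negP => /(before_find 0).
by rewrite nth_iota // add0n z_in.
Qed.

Lemma mem_ball_dist x z : z \in ball e (dist e x z) x.
Proof.
have [n n_lt z_in] : exists2 n, n < #|T| & z \in ball e n x.
  have /connectP [p xp ->] := e_conn x z.
  have [q xq uq _] := shortenP xp.
  exists (size q); last exact: path_ball.
  by have := max_card (mem (x :: q)); rewrite (card_uniqP uq).
have has_n : has (fun n => z \in ball e n x) (iota 0 #|T|).
  by apply/hasP; exists n; rewrite ?mem_iota.
have := nth_find 0 has_n; rewrite nth_iota ?add0n //.
by rewrite -[X in _ < X](size_iota 0 #|T|) -has_find.
Qed.

Lemma dist_edge x a b : e a b -> dist e x b <= (dist e x a).+1.
Proof. by move=> ab; apply/ball_dist_le/(ball_step (mem_ball_dist x a)). Qed.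

Lemma dist_descend x z :
  0 < dist e x z -> exists2 w, e w z & dist e x w < dist e x z.
Proof.
have := mem_ball_dist x z; case dxz: (dist e x z) => [|k] // + _.
rewrite ballS !inE => /orP [/ball_dist_le|/existsP [w /andP [/ball_dist_le w_le wz]]].
  by rewrite dxz ltnn.
by exists w.
Qed.

Lemma dist_eq0 x z : (dist e x z == 0) = (z == x).
Proof.
apply/idP/eqP => [/eqP d0|->]; last by rewrite -leqn0 ball_dist_le ?inE.
by have := mem_ball_dist x z; rewrite d0 inE => /eqP.
Qed.

Lemma dist_xx x : dist e x x = 0.
Proof. by apply/eqP; rewrite dist_eq0. Qed.

Lemma dist_eq1 x z : x != z -> (dist e x z == 1) = e x z.
Proof.
move=> xz; apply/idP/idP => [/eqP d1|xz_e].
  have := mem_ball_dist x z; rewrite d1 ballS !inE eq_sym (negbTE xz).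
  by case/existsP => w /andP [/set1P -> ].
rewrite eqn_leq ball_dist_le ?(ball_step _ xz_e) ?inE //.
by rewrite lt0n dist_eq0 eq_sym.
Qed.

Lemma dist_ge2 x z : x != z -> ~~ e x z -> 2 <= dist e x z.
Proof.
move=> xz /negbTE; rewrite -(dist_eq1 xz); case: (dist e x z) (dist_eq0 x z) => [|[|]] //.
by rewrite eq_sym (negbTE xz).
Qed.

Lemma dist1E x z : dist1 e x z = if z == x then 0 else if e x z then 1 else 2.
Proof.
rewrite /dist1; have [->|zx] := eqVneq z x; first by rewrite dist_xx.
have xz : x != z by rewrite eq_sym.
case: ifP => [xz_e|/negbT xz_ne]; first by rewrite (eqP _ : dist e x z = 1) // dist_eq1.
exact/minn_idPr/dist_ge2.
Qed.

Lemma closed_full (A : {set T}) x :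
  x \in A -> (forall y z, y \in A -> e y z -> z \in A) -> forall z, z \in A.
Proof.
move=> xA A_closed z; have /connectP [p + ->] := e_conn x z.
by elim: p x xA => [|y p IHp] x xA //= /andP [/(A_closed _ _ xA) yA /(IHp _ yA)].
Qed.

Hypotheses (e_sym : symmetric e) (e_irr : irreflexive e).
Hypothesis e_acyc : forall c, ~~ is_cycle e c.

Definition avoid_rel (a : T) : rel T := [rel x y | [&& e x y, x != a & y != a]].

Lemma connect_avoid r a b :
  b != a -> dist e r b <= dist e r a -> connect (avoid_rel a) b r.
Proof.
move=> ba b_low; have [k] := ubnP (dist e r b).
elim: k b ba b_low => [|k IHk] b ba b_low b_lt //.
case: (posnP (dist e r b)) => [/eqP|/dist_descend [w wb w_lt]].
  by rewrite dist_eq0 => /eqP ->.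
have wa : w != a by apply: contraTneq w_lt => ->; rewrite -leqNgt.
apply: (connect_trans (y := w)); first by apply: connect1; rewrite /avoid_rel /= e_sym wb ba.
exact: IHk wa (ltnW (leq_trans w_lt b_low)) (leq_trans w_lt b_lt).
Qed.

(* Two distinct neighbours of [a] that are not farther from [r] than [a] would
   close a cycle through [a] and [r]. *)
Lemma lower_nbr_uniq r a b1 b2 : e a b1 -> e a b2 ->
  dist e r b1 <= dist e r a -> dist e r b2 <= dist e r a -> b1 = b2.
Proof.
move=> ab1 ab2 b1_low b2_low; apply/eqP/negPn/negP => b12.
have nbr_neq b : e a b -> b != a by apply: contraTneq => ->; rewrite e_irr.
have avoid_sym : connect_sym (avoid_rel a).
  by apply: sym_connect_sym => x y; rewrite /avoid_rel /= e_sym (andbC (x != a)).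
have /connectP [p p_path b2_last] : connect (avoid_rel a) b1 b2.
  apply: connect_trans (connect_avoid (nbr_neq _ ab1) b1_low) _.
  by rewrite avoid_sym connect_avoid ?nbr_neq.
case: (shortenP p_path) b2_last => q q_path q_uniq _ b2_last.
have a_notin_q : a \notin b1 :: q.
  rewrite inE negb_or eq_sym nbr_neq //=.
  apply: contraTN q_path => /splitPr [q1 q2].
  by rewrite cat_path /= /avoid_rel /= eqxx !(andbF, andFb).
apply: (negP (e_acyc (a :: b1 :: q))); rewrite /is_cycle cons_uniq a_notin_q q_uniq /=.
rewrite ab1 rcons_path -b2_last e_sym ab2 (sub_path _ q_path) => [|x y /and3P [] //].
by case: q {q_path q_uniq a_notin_q} b2_last => [|y q] //= b21; rewrite b21 eqxx in b12.
Qed.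

Lemma exists_leaf_closer x y :
  x != y -> exists2 a, leaf e a & dist e x a < dist e y a.
Proof.
move=> xy; pose closer_x := [pred a | dist e x a < dist e y a].
have x_closer : closer_x x by rewrite /= dist_xx lt0n dist_eq0.
have [a a_closer a_far] := arg_maxnP (dist e y) x_closer.
exists a => //.
have ay : a != y by apply: contraTneq a_closer => ->; rewrite /= dist_xx.
have [w wa _] : exists2 w, e w a & dist e y w < dist e y a.
  by apply: dist_descend; rewrite lt0n dist_eq0.
have nbr_low b : e a b -> dist e y b <= dist e y a.
  move=> ab; rewrite leqNgt; apply/negP => a_lt.
  have : closer_x b.
    by rewrite /=; apply: leq_ltn_trans (dist_edge x ab) (leq_ltn_trans a_closer a_lt).
  by move/a_far => /=; rewrite leqNgt a_lt.
rewrite /leaf /deg eqn_leq card_gt0 andbC; apply/andP; split.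
  by apply/set0Pn; exists w; rewrite inE e_sym.
rewrite leqNgt; apply/negP => /card_gt1P [b1 [b2 [+ + b12]]]; rewrite !inE => ab1 ab2.
by move: b12; rewrite (lower_nbr_uniq ab1 ab2 (nbr_low _ ab1) (nbr_low _ ab2)) eqxx.
Qed.

Lemma exists_pendant (S : {set T}) r : r \in S ->
  exists2 i, i \in S & {in S &, forall b1 b2, e i b1 -> e i b2 -> b1 = b2}.
Proof.
move=> rS; have [i iS i_far] := arg_maxnP (dist e r) rS.
exists i => // b1 b2 /i_far b1_low /i_far b2_low ib1 ib2.
exact: lower_nbr_uniq ib1 ib2 b1_low b2_low.
Qed.

Lemma leaf_adj_uniq l w w' : leaf e l -> e l w -> e l w' -> w = w'.
Proof.
rewrite /leaf /deg => /cards1P [c c_nbrs] lw lw'.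
have : w \in [set w | e l w] by rewrite inE.
have : w' \in [set w | e l w] by rewrite inE.
by rewrite c_nbrs !inE => /eqP -> /eqP.
Qed.

Definition support (l : T) : T := odflt l [pick s | e l s].

Lemma leaf_support l : leaf e l -> e l (support l).
Proof.
move=> l_leaf; rewrite /support; case: pickP => [//|no_nbr].
move: l_leaf; rewrite /leaf /deg => /cards1P [c c_nbrs].
by have := set11 c; rewrite -c_nbrs inE no_nbr.
Qed.

Lemma major_nonleaf v : major e v -> ~~ leaf e v.
Proof. by rewrite /major /leaf; apply: contraTN => /eqP ->. Qed.

Lemma leaf_neq_nonleaf a b : leaf e a -> ~~ leaf e b -> a != b.
Proof. by move=> a_leaf; apply: contraNneq => <-. Qed.

Lemma R1set_near x y z : z \in R1set e x y -> [|| z == x, e x z, z == y | e y z].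
Proof.
rewrite inE !dist1E.
by case: (z == x); case: (e x z); case: (z == y); case: (e y z).
Qed.

Lemma R1set_common_nbr x y w : e x w -> e y w -> w \notin R1set e x y.
Proof.
move=> xw yw; rewrite inE !dist1E xw yw negbK.
have nbr_neq a : e a w -> (w == a) = false by apply: contraTF => /eqP <-; rewrite e_irr.
by rewrite !nbr_neq.
Qed.

Hypothesis has_major : exists v, major e v.

(* The major vertex excludes the tree with two vertices, where the two
   leaves are adjacent. *)
Lemma support_nonleaf l : leaf e l -> ~~ leaf e (support l).
Proof.
move=> l_leaf; apply/negP => s_leaf; have [v /major_nonleaf] := has_major.
have ls := leaf_support l_leaf.
have closed y z : y \in [set l; support l] -> e y z -> z \in [set l; support l].
  rewrite !inE => /orP [] /eqP -> yz; first by rewrite (leaf_adj_uniq l_leaf yz ls) eqxx orbT.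
  by rewrite e_sym in ls; rewrite (leaf_adj_uniq s_leaf yz ls) eqxx.
have := closed_full (A := [set l; support l]) (setU11 _ _) closed v.
by rewrite !inE => /orP [] /eqP ->; rewrite ?l_leaf ?s_leaf.
Qed.

Lemma exists_leaf : exists l, leaf e l.
Proof.
have [v] := has_major; rewrite /major /deg => /ltnW/ltnW/card_gt0P [w].
rewrite inE => vw; have /exists_leaf_closer [l l_leaf _] : v != w.
  by apply: contraTneq vw => ->; rewrite e_irr.
by exists l.
Qed.

Definition leaves : {set T} := [set l | leaf e l].
Definition inner : {set T} := [set s | ~~ leaf e s].
Definition leaf_nbrs (s : T) : {set T} := [set l | e s l & leaf e l].
Definition weak_supports : {set T} := [set s in inner | #|leaf_nbrs s| == 1%N].
Definition nonweak_inner : {set T} := [set s in inner | #|leaf_nbrs s| != 1%N].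
Definition pendant_leaf (s : T) : T := odflt s [pick l in leaf_nbrs s].

Lemma inner_weakVnonweak z :
  ~~ leaf e z -> (z \in weak_supports) || (z \in nonweak_inner).
Proof. by move=> z_inner; rewrite !inE z_inner orbN. Qed.

Lemma leaf_nbrs_weak s : s \in weak_supports -> leaf_nbrs s = [set pendant_leaf s].
Proof.
rewrite inE => /andP [_ /cards1P [l0 l0_nbrs]]; rewrite l0_nbrs /pendant_leaf.
by case: pickP => [l|/(_ l0)]; rewrite l0_nbrs inE ?eqxx // => /eqP ->.
Qed.

Lemma pendant_leafP s :
  s \in weak_supports -> leaf e (pendant_leaf s) /\ e s (pendant_leaf s).
Proof. by move/leaf_nbrs_weak/setP/(_ (pendant_leaf s)); rewrite !inE eqxx => /andP []. Qed.

Lemma weak_support_nonleaf s : s \in weak_supports -> ~~ leaf e s.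
Proof. by rewrite !inE => /andP []. Qed.

Lemma weak_support_nbr i z : i \in weak_supports -> e i z ->
  [|| z == pendant_leaf i, z \in weak_supports | z \in nonweak_inner].
Proof.
move=> i_weak iz; have [z_leaf|/inner_weakVnonweak ->] := boolP (leaf e z); last by rewrite orbT.
suff /set1P -> : z \in [set pendant_leaf i] by rewrite eqxx.
by rewrite -leaf_nbrs_weak // inE iz.
Qed.

(** * Resolving and 1-truncated resolving functions *)

Section Weighting.
Variable R : realType.
Local Open Scope ring_scope.

Definition half_leaves : T -> R := fun z => if leaf e z then 2^-1 else 0.

Lemma half_leaves_ge0 s : 0 <= half_leaves s.
Proof. by rewrite /half_leaves; case: ifP => _; lra. Qed.

Lemma half_leaves_resolving : resolving_fun e half_leaves.
Proof.
split=> [s|x y xy]; first by rewrite half_leaves_ge0 /half_leaves; case: ifP => _; lra.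
have [a a_leaf a_x] := exists_leaf_closer xy.
have [b b_leaf b_y] : exists2 b, leaf e b & (dist e y b < dist e x b)%N.
  by apply: exists_leaf_closer; rewrite eq_sym.
have ab : a != b by apply: contraTneq a_x => ->; rewrite -leqNgt ltnW.
have ab_R : [set a; b] \subset Rset e x y.
  by apply/subsetP => z; rewrite !inE => /orP [] /eqP ->; rewrite neq_ltn ?a_x ?b_y ?orbT.
apply: le_trans (gsum_subset half_leaves_ge0 ab_R).
by rewrite /gsum big_setU1 ?inE //= big_set1 /half_leaves a_leaf b_leaf; lra.
Qed.

Lemma gsum_half_leaves : gsum half_leaves setT = #|leaves|%:R / 2.
Proof.
rewrite /gsum (big_setID leaves) /= setTI [X in _ + X]big1 => [|z]; last first.
  by rewrite !inE andbT /half_leaves => /negbTE ->.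
rewrite addr0 (eq_bigr (fun=> 2^-1)) => [|z]; last by rewrite inE /half_leaves => ->.
by rewrite sumr_const mulrC mulr_natr.
Qed.

End Weighting.

Section Excess.
Variables (R : realType) (h : T -> R).
Local Open Scope ring_scope.
Hypothesis h_ge0 : forall s, 0 <= h s.
Hypothesis h_res : forall x y, x != y -> 1 <= gsum h (R1set e x y).

Lemma R1set_cover x y (xs : seq T) (Y : {set T}) : x != y ->
  (forall z, z \in R1set e x y -> (z \in xs) || (z \in Y)) ->
  1 <= \sum_(s <- xs) h s + gsum h Y.
Proof. by move=> xy cover; apply: le_trans (h_res xy) (gsum_cover h_ge0 cover). Qed.

Lemma twin_leaves_weight s l l' :
  l \in leaf_nbrs s -> l' \in leaf_nbrs s -> l != l' -> 1 <= h l + h l'.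
Proof.
rewrite !inE e_sym [e s l']e_sym => /andP [ls l_leaf] /andP [l's l'_leaf] ll'.
have s_notin := R1set_common_nbr ls l's.
have := R1set_cover (xs := [:: l; l']) (Y := set0) ll'.
rewrite !big_cons big_nil /gsum big_set0 !addr0; apply=> z z_R1; rewrite !inE.
have z_ne_s : z != s by apply: contraTneq z_R1 => ->.
case/or4P: (R1set_near z_R1) => [->|lz|->|l'z]; rewrite ?orbT //.
- by rewrite (leaf_adj_uniq l_leaf lz ls) eqxx in z_ne_s.
- by rewrite (leaf_adj_uniq l'_leaf l'z l's) eqxx in z_ne_s.
Qed.

Lemma weak_pair_weight i j : i \in weak_supports -> j \in weak_supports -> i != j ->
  1 <= h (pendant_leaf i) + h i + h (pendant_leaf j) + h j.
Proof.
move=> i_weak j_weak ij.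
have [li_leaf /[1!e_sym] li_i] := pendant_leafP i_weak.
have [lj_leaf /[1!e_sym] lj_j] := pendant_leafP j_weak.
have lij : pendant_leaf i != pendant_leaf j.
  by apply: contraNneq ij => lij; apply/eqP/(leaf_adj_uniq li_leaf li_i); rewrite lij.
have := R1set_cover (xs := [:: pendant_leaf i; i; pendant_leaf j; j]) (Y := set0) lij.
rewrite !big_cons big_nil /gsum big_set0 !addr0 !addrA; apply=> z z_R1; rewrite !inE.
case/or4P: (R1set_near z_R1) => [->|/(leaf_adj_uniq li_leaf li_i) <-|->|];
  last move/(leaf_adj_uniq lj_leaf lj_j) <-; by rewrite ?eqxx ?orbT.
Qed.

Lemma weak_cover_weight i (xs : seq T) : i \in weak_supports ->
  {in weak_supports, forall z, e i z -> z \in xs} ->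
  1 <= h (pendant_leaf i) + h i + \sum_(x <- xs) h x + gsum h nonweak_inner.
Proof.
move=> i_weak xs_nbrs; have [l_leaf /[1!e_sym] l_i] := pendant_leafP i_weak.
have l_ne_i := leaf_neq_nonleaf l_leaf (weak_support_nonleaf i_weak).
have := R1set_cover (xs := [:: pendant_leaf i, i & xs]) (Y := nonweak_inner) l_ne_i.
rewrite !big_cons !addrA; apply=> z z_R1; rewrite !in_cons.
case/or4P: (R1set_near z_R1) => [->|/(leaf_adj_uniq l_leaf l_i) <-|->|iz];
  rewrite ?eqxx ?orbT //.
by case/or3P: (weak_support_nbr i_weak iz) => [->|/xs_nbrs/(_ iz) ->|->]; rewrite ?orbT.
Qed.

Lemma weak_nbr_weight i j : i \in weak_supports -> j \in weak_supports -> e i j ->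
  {in weak_supports, forall z, e i z -> z = j} ->
  1 <= h i + h (pendant_leaf i) + h (pendant_leaf j) + gsum h nonweak_inner.
Proof.
move=> i_weak j_weak ij j_uniq; have [lj_leaf /[1!e_sym] lj_j] := pendant_leafP j_weak.
have i_ne_lj : i != pendant_leaf j.
  by rewrite eq_sym leaf_neq_nonleaf ?weak_support_nonleaf.
have j_notin := R1set_common_nbr ij lj_j.
have := R1set_cover (xs := [:: i; pendant_leaf i; pendant_leaf j]) (Y := nonweak_inner) i_ne_lj.
rewrite !big_cons big_nil addr0 !addrA; apply=> z z_R1; rewrite !in_cons.
have z_ne_j : z != j by apply: contraTneq z_R1 => ->.
case/or4P: (R1set_near z_R1) => [->|iz|->|/(leaf_adj_uniq lj_leaf lj_j) zj];
  rewrite ?orbT //; last by rewrite zj eqxx in z_ne_j.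
case/or3P: (weak_support_nbr i_weak iz) => [->|/j_uniq/(_ iz) zj|->]; rewrite ?orbT //.
by rewrite zj eqxx in z_ne_j.
Qed.

Lemma leaf_weight_no_weak u x : weak_supports = set0 -> ~~ leaf e u ->
  leaf_nbrs u = set0 -> leaf e x -> 1 <= h x + gsum h nonweak_inner.
Proof.
move=> no_weak u_inner u_no_leaf x_leaf.
have inner_nonweak z : ~~ leaf e z -> z \in nonweak_inner.
  by move/inner_weakVnonweak; rewrite no_weak inE.
have := R1set_cover (xs := [:: x]) (Y := nonweak_inner) (leaf_neq_nonleaf x_leaf u_inner).
rewrite big_cons big_nil addr0; apply=> z z_R1; rewrite in_cons.
case/or4P: (R1set_near z_R1) => [->//|xz|/eqP ->|uz].
- rewrite -(leaf_adj_uniq x_leaf (leaf_support x_leaf) xz).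
  by rewrite inner_nonweak ?support_nonleaf ?orbT.
- by rewrite inner_nonweak ?orbT.
- rewrite inner_nonweak ?orbT //; apply: contraFN (in_set0 z) => z_leaf.
  by rewrite -u_no_leaf inE uz.
Qed.

Lemma weak_isolated_weight i : i \in weak_supports ->
  {in weak_supports, forall z, ~~ e i z} ->
  1 <= h (pendant_leaf i) + h i + gsum h nonweak_inner.
Proof.
move=> i_weak no_nbr; have := @weak_cover_weight i [::] i_weak.
by rewrite big_nil addr0; apply=> z /no_nbr /negbTE ->.
Qed.

Lemma weak_unique_nbr_weight i j : i \in weak_supports ->
  {in weak_supports, forall z, e i z -> z = j} ->
  1 <= h (pendant_leaf i) + h i + h j + gsum h nonweak_inner.
Proof.
move=> i_weak j_uniq; have := @weak_cover_weight i [:: j] i_weak.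
by rewrite big_seq1; apply=> z /j_uniq j_u /j_u ->; rewrite mem_head.
Qed.

Definition excess (s : T) : R := h s + \sum_(l in leaf_nbrs s) (h l - 2^-1).

Lemma excess_weak s :
  s \in weak_supports -> excess s = h s + h (pendant_leaf s) - 2^-1.
Proof. by move=> s_weak; rewrite /excess leaf_nbrs_weak // big_set1 addrA. Qed.

Lemma excess_nonweak s : s \in nonweak_inner -> h s <= excess s.
Proof.
rewrite inE => /andP [_ not1]; rewrite /excess lerDl.
apply: sumr_ge0_pairwise => // l l' l_nbr l'_nbr ll'.
by have := twin_leaves_weight l_nbr l'_nbr ll'; lra.
Qed.

Lemma sum_leaves_by_support (f : T -> R) :
  \sum_(l in leaves) f l = \sum_(s in inner) \sum_(l in leaf_nbrs s) f l.
Proof.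
rewrite (partition_big support (mem inner)) => [|l]; last by rewrite !inE => /support_nonleaf.
apply: eq_bigr => s _; apply: eq_bigl => l; rewrite !inE.
apply/andP/andP => [[l_leaf /eqP <-]|[sl l_leaf]]; first by rewrite e_sym leaf_support.
by split=> //; apply/eqP/(leaf_adj_uniq l_leaf (leaf_support l_leaf)); rewrite e_sym.
Qed.

Lemma sum_excess : \sum_(s in inner) excess s = gsum h setT - #|leaves|%:R / 2.
Proof.
rewrite big_split /= -sum_leaves_by_support sumrB sumr_const addrA.
congr (_ - _); last by rewrite mulrC mulr_natr.
rewrite /gsum [RHS](big_setID inner) /= setTI; congr (_ + _).
by apply: eq_bigl => z; rewrite !inE andbT negbK.
Qed.

Lemma weak_pair_nbr i j : weak_supports = [set i; j] ->
  {in weak_supports, forall z, e i z -> z = j}.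
Proof. by move=> weak_ij z; rewrite weak_ij !inE => /orP [] /eqP -> //; rewrite e_irr. Qed.

Lemma weak_two_excess_pos i j : weak_supports = [set i; j] -> i != j ->
  0 < excess i + excess j + gsum h nonweak_inner.
Proof.
move=> weak_ij ij; have weak_ji : weak_supports = [set j; i] by rewrite setUC.
have [i_weak j_weak] : i \in weak_supports /\ j \in weak_supports.
  by rewrite weak_ij !inE !eqxx orbT.
have := weak_pair_weight i_weak j_weak ij; have := gsum_ge0 h_ge0 nonweak_inner.
rewrite !excess_weak //; have [ij_e|ij_n] := boolP (e i j).
  have ji_e : e j i by rewrite e_sym.
  have := weak_nbr_weight i_weak j_weak ij_e (weak_pair_nbr weak_ij).
  have := weak_nbr_weight j_weak i_weak ji_e (weak_pair_nbr weak_ji).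
  have := weak_unique_nbr_weight i_weak (weak_pair_nbr weak_ij).
  have := weak_unique_nbr_weight j_weak (weak_pair_nbr weak_ji).
  (* With y := gsum h nonweak_inner, these four bounds add up to
     3 S + 4 y >= 4, where S >= 1 is the weight of i, j and their leaves;
     hence S + y > 1. *)
  lra.
have no_nbr a b : weak_supports = [set a; b] -> ~~ e a b ->
    {in weak_supports, forall z, ~~ e a z}.
  move=> weak_ab ab z z_weak; apply/negP => az.
  by rewrite -(weak_pair_nbr weak_ab z_weak az) az in ab.
have ji_n : ~~ e j i by rewrite e_sym.
have := weak_isolated_weight i_weak (no_nbr _ _ weak_ij ij_n).
have := weak_isolated_weight j_weak (no_nbr _ _ weak_ji ji_n).
lra.
Qed.

Lemma weak_rest_excess_ge0 k :
  #|weak_supports :\ k| != 1%N -> 0 <= \sum_(s in weak_supports :\ k) excess s.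
Proof.
move=> not1; apply: sumr_ge0_pairwise => // a b /setD1P [_ a_weak] /setD1P [_ b_weak] ab.
by rewrite !excess_weak //; have := weak_pair_weight a_weak b_weak ab; lra.
Qed.

Lemma weak_many_excess_pos i : i \in weak_supports ->
  #|weak_supports :\ i| != 1%N ->
  {in weak_supports &, forall b1 b2, e i b1 -> e i b2 -> b1 = b2} ->
  0 < \sum_(s in weak_supports) excess s + gsum h nonweak_inner.
Proof.
move=> i_weak not1 i_pendant; have := gsum_ge0 h_ge0 nonweak_inner.
have sum_split k : k \in weak_supports -> \sum_(s in weak_supports) excess s =
    excess k + \sum_(s in weak_supports :\ k) excess s.
  by move=> k_weak; rewrite (big_setD1 k).
have := weak_rest_excess_ge0 not1; have := sum_split i i_weak; rewrite excess_weak //.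
case: (pickP [pred z in weak_supports | e i z]) => [j /andP [j_weak ij]|no_nbr].
  have j_uniq : {in weak_supports, forall z, e i z -> z = j}.
    by move=> z z_weak iz; apply: i_pendant.
  have card_rest k : k \in weak_supports -> #|weak_supports :\ k| = #|weak_supports|.-1.
    by move=> k_weak; rewrite (cardsD1 k weak_supports) k_weak.
  have := @weak_rest_excess_ge0 j; rewrite (card_rest j) // -(card_rest i) // => /(_ not1).
  have := sum_split j j_weak; rewrite excess_weak //.
  have := weak_nbr_weight i_weak j_weak ij j_uniq.
  have := weak_unique_nbr_weight i_weak j_uniq.
  (* With y := gsum h nonweak_inner,
     3 (sum + y) >= 2 excess i + excess j + 3 y >= 1/2 + y. *)
  lra.
have no_weak_nbr : {in weak_supports, forall z, ~~ e i z}.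
  by move=> z z_weak; move: (no_nbr z); rewrite /= z_weak => /negbT.
have := weak_isolated_weight i_weak no_weak_nbr.
lra.
Qed.

Lemma weak_excess_pos : weak_supports != set0 ->
  0 < \sum_(s in weak_supports) excess s + gsum h nonweak_inner.
Proof.
case/set0Pn=> r /exists_pendant [i i_weak i_pendant].
have [/eqP/cards1P [j weak_i]|] := eqVneq #|weak_supports :\ i| 1%N; last first.
  by move/weak_many_excess_pos; apply.
have j_in : j \in weak_supports :\ i by rewrite weak_i set11.
have ij : i != j by move: j_in; rewrite !inE eq_sym => /andP [].
have weak_ij : weak_supports = [set i; j] by rewrite -weak_i setD1K.
rewrite weak_ij big_setU1 ?inE //= big_set1.
exact: weak_two_excess_pos.
Qed.

Lemma no_weak_excess_pos u : weak_supports = set0 -> ~~ leaf e u ->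
  leaf_nbrs u = set0 -> 0 < \sum_(s in nonweak_inner) excess s.
Proof.
move=> no_weak u_inner u_no_leaf.
have [y_gt0|y_le0] := ltrP 0 (gsum h nonweak_inner).
  by apply: lt_le_trans y_gt0 _; apply: ler_sum => s /excess_nonweak.
have leaf_ge1 x : leaf e x -> 1 <= h x.
  by move=> x_leaf; have := leaf_weight_no_weak no_weak u_inner u_no_leaf x_leaf; lra.
have [x x_leaf] := exists_leaf.
have s_nonweak : support x \in nonweak_inner.
  by have := inner_weakVnonweak (support_nonleaf x_leaf); rewrite no_weak inE.
have x_nbr : x \in leaf_nbrs (support x) by rewrite inE x_leaf e_sym leaf_support.
have : 2^-1 <= excess (support x).
  rewrite /excess (big_setD1 x x_nbr) /=.
  have : 0 <= \sum_(l in leaf_nbrs (support x) :\ x) (h l - 2^-1).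
    by apply: sumr_ge0 => l; rewrite !inE => /and3P [_ _ /leaf_ge1]; lra.
  have := leaf_ge1 _ x_leaf; have := h_ge0 (support x); lra.
have : 0 <= \sum_(s in nonweak_inner :\ support x) excess s.
  by apply: sumr_ge0 => s /setD1P [_ /excess_nonweak]; have := h_ge0 s; lra.
rewrite (big_setD1 _ s_nonweak) /=; lra.
Qed.

Lemma inner_strong_support : gsum h setT <= #|leaves|%:R / 2 ->
  forall u, ~~ leaf e u -> (1 < #|leaf_nbrs u|)%N.
Proof.
move=> h_small u u_inner; rewrite ltnNge; apply/negP => u_few.
have : \sum_(s in inner) excess s <= 0 by rewrite sum_excess subr_le0.
have inner_weak : inner :&: weak_supports = weak_supports.
  by apply/setIidPr/subsetP => z; rewrite !inE => /andP [].
have inner_nonweak : inner :\: weak_supports = nonweak_inner.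
  by apply/setP => z; rewrite !inE; case: (leaf e z); case: (_ == 1%N).
rewrite (big_setID weak_supports) /= inner_weak inner_nonweak.
have : gsum h nonweak_inner <= \sum_(s in nonweak_inner) excess s.
  by apply: ler_sum => s /excess_nonweak.
have [no_weak|/weak_excess_pos] := eqVneq weak_supports set0; last by lra.
have u_no_leaf : leaf_nbrs u = set0.
  apply: cards0_eq; move: u_few; rewrite leq_eqVlt ltnS leqn0 => /orP [u_one|/eqP //].
  have : u \in weak_supports by rewrite !inE u_inner u_one.
  by rewrite no_weak inE.
have := no_weak_excess_pos no_weak u_inner u_no_leaf.
rewrite no_weak big_set0; lra.
Qed.

End Excess.

Lemma equal_fdims_strong_supports (R : realType) :
  (exists d : R, is_fdim e d /\ is_1fdim e d) ->
  forall u, ~~ leaf e u -> (1 < #|leaf_nbrs u|)%N.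
Proof.
move=> [d [[_ fdim_le] [[h [[h_unit h_res] h_total]] _]]].
have h_ge0 s : (0 <= h s)%R by case/andP: (h_unit s).
apply: (inner_strong_support h_ge0 h_res).
by rewrite h_total -gsum_half_leaves; apply/fdim_le/half_leaves_resolving.
Qed.

(** * Trees in which every non-leaf supports two leaves *)

Section StrongSupports.
Hypothesis strong : forall u, ~~ leaf e u -> (1 < #|leaf_nbrs u|)%N.

Lemma inner_major u : ~~ leaf e u -> major e u.
Proof.
move=> u_inner; rewrite /major ltnNge; apply/negP => deg_le2.
have nbrs_leaves : leaf_nbrs u = [set w | e u w].
  apply/eqP; rewrite eqEcard (leq_trans deg_le2 (strong u_inner)) andbT.
  by apply/subsetP => w; rewrite !inE => /andP [].
have closed y z : y \in u |: leaf_nbrs u -> e y z -> z \in u |: leaf_nbrs u.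
  rewrite !in_setU1 => /orP [/eqP -> uz|]; first by rewrite nbrs_leaves inE uz orbT.
  rewrite inE => /andP [uy y_leaf] yz.
  by rewrite -(leaf_adj_uniq y_leaf yz (_ : e y u)) ?eqxx // e_sym.
have [v v_major] := has_major.
have := closed_full (setU11 u (leaf_nbrs u)) closed v.
rewrite in_setU1 inE (negbTE (major_nonleaf v_major)) andbF orbF => /eqP v_u.
by move: v_major; rewrite v_u /major ltnNge deg_le2.
Qed.

Lemma terminal_adj v l : terminal_of e l v -> e v l.
Proof.
case/and3P => l_leaf v_major /forallP v_closest.
have l_s := leaf_support l_leaf.
have [<-|s_ne_v] := eqVneq (support l) v; first by rewrite e_sym.
have l_ne_s : l != support l := leaf_neq_nonleaf l_leaf (support_nonleaf l_leaf).
have d_ls : dist e l (support l) = 1%N by apply/eqP; rewrite dist_eq1.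
have := v_closest (support l); rewrite inner_major ?support_nonleaf // s_ne_v d_ls /=.
rewrite ltnS leqn0 dist_eq0 => /eqP v_l.
by move: (major_nonleaf v_major); rewrite v_l l_leaf.
Qed.

Lemma major_ter_gt1 v : major e v -> (1 < ter e v)%N.
Proof.
move=> v_major; apply: leq_trans (strong (major_nonleaf v_major)) _.
apply: subset_leq_card; apply/subsetP => l; rewrite !inE => /andP [vl l_leaf].
rewrite /terminal_of l_leaf v_major; apply/forallP => w; apply/implyP => /andP [w_major w_ne_v].
have l_ne_v := leaf_neq_nonleaf l_leaf (major_nonleaf v_major).
have l_ne_w := leaf_neq_nonleaf l_leaf (major_nonleaf w_major).
rewrite (eqP (_ : dist e l v == 1%N)) ?dist_eq1 1?e_sym //.
apply: dist_ge2 l_ne_w _; apply: contra w_ne_v => lw.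
by rewrite (leaf_adj_uniq l_leaf lw (_ : e l v)) // e_sym.
Qed.

Lemma not_interior_deg2 u : ~~ interior_deg2 e u.
Proof.
apply/negP => /andP [/eqP deg2 _].
have /inner_major : ~~ leaf e u by rewrite /leaf deg2.
by rewrite /major deg2.
Qed.

End StrongSupports.
End Tree.

Theorem lemma3p15 (R : realType) (T : finType) (e : rel T) :
  is_tree e ->
  1 <= ex_T e ->
  (exists v : R, is_fdim e v /\ is_1fdim e v) ->
  [/\ (forall v, v \in M2 e -> forall l, terminal_of e l v -> e v l),
      (forall v, major e v -> ter e v <> 1)
    & (forall v, major e v -> ter e v <> 0) /\ (forall u, ~~ interior_deg2 e u)].
Proof.
move=> [[e_sym e_irr] _ e_conn e_acyc] ex_gt0 equal_fdims.
have has_major : exists v, major e v.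
  by move/card_gt0P: ex_gt0 => [v]; rewrite inE => /andP [v_major _]; exists v.
have strong := equal_fdims_strong_supports e_conn e_sym e_irr e_acyc has_major equal_fdims.
have ter_gt1 := major_ter_gt1 e_conn e_sym strong.
split=> [v _ l|v /ter_gt1 + ter1|]; first exact: (terminal_adj e_conn e_sym has_major strong).
  by rewrite ter1.
split=> [v /ter_gt1 + ter0|]; first by rewrite ter0.
exact: not_interior_deg2 e_conn e_sym has_major strong.
Qed.
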